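(* Let $(X,u)$ be a regular Čech closure space and $(Y,v)$ an arbitrary Čech closure space, and let $Y^X$ be the set of all continuous maps $(X,u)\to(Y,v)$. For every interior cover $\mathcal C$ of $X$, the $\mathcal C$-topology on $Y^X$ is admissible.
   Context: A Čech closure space $(X,u)$ is a set $X$ with an operator $u:\mathcal P(X)\to\mathcal P(X)$ satisfying $u(\emptyset)=\emptyset$, $A\subset u(A)$, and $u(A\cup B)=u(A)\cup u(B)$. The interior is $\mathrm{int}_u A=X\setminus u(X\setminus A)$; $U$ is a neighbourhood of a point $x$ (of a set $A$) if $x\in\mathrm{int}_uU$ ($A\subset\mathrm{int}_uU$). $(X,u)$ is regular if for each $x\in X$ and $A\subset X$ with $x\notin u(A)$ there are disjoint neighbourhoods of $x$ and of $A$. A map $f:(X,u)\to(Y,v)$ is continuous if $f(u(A))\subset v(f(A))$ for all $A$. An interior cover of $X$ is a family $\mathcal C$ of subsets of $X$ such that $\{\mathrm{int}_uC: C\in\mathcal C\}$ covers $X$. Let $\mathcal V=\{V\subset Y:\mathrm{int}_vV\ne\emptyset\}$ and for $A\subset X$, $V\subset Y$ let $(A,V)=\{f\in Y^X: f(A)\subset V\}$. The $\mathcal C$-topology is the topology on $Y^X$ generated by the subbase $\{(u(K),V): V\in\mathcal V,\ K\subset X \text{ with } u(K)\subset C \text{ for some } C\in\mathcal C\}$. The product $(Z,w)\times(X,u)$ is $Z\times X$ with the closure operator for which the sets $W\times U$ ($W$ a neighbourhood of $z$, $U$ of $x$) form a neighbourhood base at $(z,x)$; for $g:Z\times X\to Y$,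 $g^*(z)(x)=g(z,x)$. A topology on $Y^X$ (regarded as its Kuratowski closure operator $\sigma$) is admissible if for every closure space $(Z,w)$ and every $g:Z\times X\to Y$ with $g^*(Z)\subset Y^X$, continuity of $g^*:(Z,w)\to(Y^X,\sigma)$ implies continuity of $g:(Z,w)\times(X,u)\to(Y,v)$. *)

From mathcomp Require Import all_boot.
From mathcomp Require Export classical_sets boolp.



Unset Printing Implicit Defensive.

Local Open Scope classical_set_scope.

Definition is_closure {X : Type} (u : set X -> set X) : Prop :=
  [/\ u set0 = set0,
      (forall A, A `<=` u A) &
      (forall A B, u (A `|` B) = u A `|` u B)].

Definition cint {X : Type} (u : set X -> set X) (A : set X) : set X :=
  ~` u (~` A).

Definition cnbhd {X : Type} (u : set X -> set X) (x : X) (U : set X) : Prop :=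
  cint u U x.
Definition cnbhd_set {X : Type} (u : set X -> set X) (A U : set X) : Prop :=
  A `<=` cint u U.

Definition cregular {X : Type} (u : set X -> set X) : Prop :=
  forall (x : X) (A : set X), ~ u A x ->
    exists U V, [/\ cnbhd u x U, cnbhd_set u A V & U `&` V = set0].

Definition ccontinuous {X Y : Type} (u : set X -> set X) (v : set Y -> set Y)
  (f : X -> Y) : Prop :=
  forall A : set X, f @` (u A) `<=` v (f @` A).

Definition interior_cover {X : Type} (u : set X -> set X) (C : set (set X)) : Prop :=
  forall x : X, exists2 c, C c & cint u c x.

(** product closure: W × U (W nbhd of z, U nbhd of x) form a nbhd base at (z,x) *)
Definition prod_closure {Z X : Type} (w : set Z -> set Z) (u : set X -> set X)
  (S : set (Z * X)) : set (Z * X) :=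
  [set p | forall W U, cnbhd w p.1 W -> cnbhd u p.2 U ->
             exists q, [/\ S q, W q.1 & U q.2]].

Inductive gen_open {T : Type} (B : set (set T)) : set T -> Prop :=
  | go_base b : B b -> gen_open B b
  | go_setT : gen_open B setT
  | go_setI a b : gen_open B a -> gen_open B b -> gen_open B (a `&` b)
  | go_bigcup (F : set (set T)) :
      (forall a, F a -> gen_open B a) -> gen_open B (\bigcup_(a in F) a).

Definition kclosure {T : Type} (B : set (set T)) (A : set T) : set T :=
  [set t | forall O, gen_open B O -> O t -> exists2 s, O s & A s].

Definition cmaps {X Y : Type} (u : set X -> set X) (v : set Y -> set Y) :=
  {f : X -> Y | ccontinuous u v f}.

Definition cobox {X Y : Type} {u : set X -> set X} {v : set Y -> set Y}
  (A : set X) (V : set Y) : set (cmaps u v) :=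
  [set f | (sval f) @` A `<=` V].

Definition Ctop_subbase {X Y : Type} (u : set X -> set X) (v : set Y -> set Y)
  (C : set (set X)) : set (set (cmaps u v)) :=
  [set S | exists K V, [/\ cint v V !=set0,
                          (exists2 c, C c & u K `<=` c) &
                          S = @cobox X Y u v (u K) V]].

Definition Ctop_closure {X Y : Type} (u : set X -> set X) (v : set Y -> set Y)
  (C : set (set X)) : set (cmaps u v) -> set (cmaps u v) :=
  kclosure (Ctop_subbase u v C).

Definition admissible {X Y : Type} (u : set X -> set X) (v : set Y -> set Y)
  (sigma : set (cmaps u v) -> set (cmaps u v)) : Prop :=
  forall (Z : Type) (w : set Z -> set Z), is_closure w ->
  forall (g : Z * X -> Y) (hg : forall z, ccontinuous u v (fun x => g (z, x))),
    ccontinuous w sigma (fun z => exist _ (fun x => g (z, x)) (hg z) : cmaps u v) ->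
    ccontinuous (prod_closure w u) v g.

From mathcomp Require Import all_boot classical_sets boolp.

(* Suppose (z, x) lies in the product closure of S but g (z, x) does not lie
   in v B, B := g(S).  Continuity of g(z, -) puts x outside the closure of
   A := {x' | g (z, x') \in B}, and regularity together with the interior
   cover yields a neighbourhood U of x such that u U lies in some c \in C and
   misses A.  Then the subbasic set O = (u U, ~ B) contains g*(z), so by
   continuity of g* the points z' with g*(z') \in O form a neighbourhood of z.
   The product neighbourhood it spans with U meets S at some q, and then
   g q \in B \cap g*(q.1)(u U), which contradicts g*(q.1) \in O. *)

Local Open Scope classical_set_scope.

Section ClosureOperator.
Context {X : Type} {u : set X -> set X} (hu : is_closure u).

Lemma closure_sub A : A `<=` u A.
Proof. by case: hu. Qed.

Lemma closureU A B : u (A `|` B) = u A `|` u B.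
Proof. by case: hu. Qed.

Lemma closure_mono : {homo u : A B / A `<=` B}.
Proof. by move=> A B /setUidr <-; rewrite closureU => t ut; left. Qed.

Lemma cintC A : cint u (~` A) = ~` u A.
Proof. by rewrite /cint setCK. Qed.

Lemma cregular_nbhd_closure_disjoint {x : X} {A : set X} :
  cregular u -> ~ u A x -> exists2 U, cnbhd u x U & u U `<=` ~` A.
Proof.
move=> hreg /hreg [U [V [Ux AV /disjoints_subset UV]]]; exists U => // t tU At.
exact: AV t At (closure_mono _ _ UV _ tU).
Qed.

Lemma interior_cover_regular_nbhd {C : set (set X)} {x : X} {A : set X} :
  interior_cover u C -> cregular u -> ~ u A x ->
  exists U c, [/\ C c, cnbhd u x U, u U `<=` c & u U `<=` ~` A].
Proof.
move=> hC hreg nAx; have [c Cc cx] := hC x.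
have nAcx : ~ u (A `|` ~` c) x by rewrite closureU => -[]; [exact: nAx | exact: cx].
have [U Ux UAc] := cregular_nbhd_closure_disjoint hreg nAcx.
by exists U, c; split=> // t /UAc; rewrite setCU => -[nAt /contrapT].
Qed.

End ClosureOperator.

Lemma ccontinuous_closure_preimage {X Y : Type} {u : set X -> set X}
    {v : set Y -> set Y} {f : X -> Y} {B : set Y} :
  {homo v : A A' / A `<=` A'} -> ccontinuous u v f ->
  u (f @^-1` B) `<=` f @^-1` v B.
Proof.
move=> v_mono hf x ux; apply: (v_mono _ _ (@image_preimage_subset _ _ f B)).
exact: hf.
Qed.

Lemma kclosure_mono {T : Type} (B : set (set T)) :
  {homo kclosure B : A A' / A `<=` A'}.
Proof.
move=> A A' AA' t clA O oO Ot; have [s Os As] := clA O oO Ot.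
by exists s => //; exact: AA'.
Qed.

Lemma kclosure_setC_open {T : Type} {B : set (set T)} {O : set T} :
  gen_open B O -> kclosure B (~` O) `<=` ~` O.
Proof. by move=> oO t /(_ O oO) cl Ot; have [s] := cl Ot. Qed.

Theorem theorem9 (X Y : Type) (u : set X -> set X) (v : set Y -> set Y)
  (hu : is_closure u) (hreg : cregular u) (hv : is_closure v)
  (C : set (set X)) (hC : interior_cover u C) :
  admissible u v (Ctop_closure u v C).
Proof.
move=> Z w _ g hg hcont S _ [[z x] zxS <-]; apply: contrapT => nBzx.
set B := g @` S.
set gs := fun z => exist _ (fun x => g (z, x)) (hg z) : cmaps u v.
have nAx : ~ u ((fun x' => g (z, x')) @^-1` B) x.
  by move=> /(ccontinuous_closure_preimage (closure_mono hv) (hg z)).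
have [U [c [Cc Ux UUc UUA]]] := interior_cover_regular_nbhd hu hC hreg nAx.
set O := @cobox X Y u v (u U) (~` B).
have oO : gen_open (Ctop_subbase u v C) O.
  apply: go_base; exists U, (~` B); split=> //; first by exists (g (z, x)); rewrite cintC.
  by exists c.
have Ogs_z : O (gs z) by move=> _ [t /UUA At <-].
have Wz : cnbhd w z (~` (gs @^-1` ~` O)).
  rewrite /cnbhd cintC.
  move=> /(ccontinuous_closure_preimage (kclosure_mono _) hcont).
  by move=> /(kclosure_setC_open oO)/(_ Ogs_z).
have [[z' x'] [Sq Oz' Ux']] := zxS _ U Wz Ux.
have gUx' : (fun x => g (z', x)) @` u U `<=` ~` B := contrapT Oz'.
apply: (gUx' (g (z', x'))); last by exists (z', x').
by exists x'; first exact: closure_sub hu U _ Ux'.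
Qed.
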